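(* Let $K\in\mathbb{N}$ and $f_1,\dots,f_K\in\mathcal{S}'(\mathbb{Z}^{d})$. Define $d:\mathbb{Z}^d\to\mathbb{C}$ by $d(\mathbf{n})=\max\{|f_1(\mathbf{n})|,\dots,|f_K(\mathbf{n})|\}$. Then $d\in\mathcal{S}'(\mathbb{Z}^{d})$ and $d$ is a greatest common divisor of $f_1,\dots,f_K$ in $\mathcal{S}'(\mathbb{Z}^{d})$: $d$ divides each $f_k$, and every common divisor $\tilde d\in\mathcal{S}'(\mathbb{Z}^{d})$ of $f_1,\dots,f_K$ divides $d$. (In particular every finite family has a gcd, unique up to invertible factors.)
   Context: For $\mathbf{n}=(n_1,\dots,n_d)\in\mathbb{Z}^d$ write $\|\mathbf{n}\|:=|n_1|+\cdots+|n_d|$. $\mathcal{S}'(\mathbb{Z}^{d})$ denotes the set of all maps $f:\mathbb{Z}^d\to\mathbb{C}$ of at most polynomial growth, i.e. for which there exist a real $M>0$ and an integer $m\geq 0$ with $|f(\mathbf{n})|\leq M(1+\|\mathbf{n}\|)^m$ for all $\mathbf{n}\in\mathbb{Z}^d$. It is a commutative unital ring under pointwise addition and multiplication, with unit the constant function $1$. Divisibility refers to this ring. *)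

From Stdlib Require Import Reals ZArith List.
From Coquelicot Require Import Coquelicot.
Import ListNotations.
Open Scope R_scope.

Definition Zd (d : nat) : Type := { v : list Z | length v = d }.

Definition znorm {d : nat} (n : Zd d) : R :=
  IZR (fold_right (fun z acc => (Z.abs z + acc)%Z) 0%Z (proj1_sig n)).

(* f in S'(Z^d): at most polynomial growth. *)
Definition tempered {d : nat} (f : Zd d -> C) : Prop :=
  exists (M : R) (m : nat), 0 < M /\
    forall n : Zd d, Cmod (f n) <= M * (1 + znorm n) ^ m.

Definition sdvd {d : nat} (g f : Zd d -> C) : Prop :=
  exists h : Zd d -> C, tempered h /\ forall n : Zd d, f n = Cmult (h n) (g n).

(* d(n) = max{|f_1(n)|, ..., |f_K(n)|}  (family indexed by k = 0..K-1;
   the empty maximum is 0). *)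
Definition maxabs {d : nat} (K : nat) (f : nat -> Zd d -> C) : Zd d -> C :=
  fun n => RtoC (fold_right Rmax 0 (map (fun k => Cmod (f k n)) (seq 0 K))).

From Stdlib Require Import Reals ZArith List Lia Lra.
From Coquelicot Require Import Coquelicot.

(* In the ring of polynomially bounded functions on Z^d,
   divisibility is a pointwise size comparison: g | f holds iff
   |f(n)| <= M (1 + ||n||)^m |g(n)| for some M > 0 and m (write
   "g dominates f").  Necessity is immediate from f = h g with h
   tempered; sufficiency uses the quotient h = f / g (set to 0 where
   g vanishes, where then f vanishes too).  Being tempered is the same
   as being dominated by the constant 1.  Domination of finitely many
   functions can be achieved with one common pair (M, m), hence
   domination passes to their pointwise maximum of moduli.  The theorem
   follows: max|f_k| is dominated by 1 (temperedness), it dominates each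
   f_k with M = 1, m = 0, and it is dominated by every common divisor. *)

Lemma fold_Rmax_nonneg (l : list R) : 0 <= fold_right Rmax 0 l.
Proof.
  induction l as [|x l IH]; simpl; [lra|].
  eapply Rle_trans; [exact IH | apply Rmax_r].
Qed.

Lemma fold_Rmax_ge (l : list R) (x : R) : In x l -> x <= fold_right Rmax 0 l.
Proof.
  induction l as [|y l IH]; simpl; [tauto|].
  intros [<- | Hx]; [apply Rmax_l|].
  eapply Rle_trans; [exact (IH Hx) | apply Rmax_r].
Qed.

Lemma fold_Rmax_lub (l : list R) (B : R) :
  0 <= B -> (forall x, In x l -> x <= B) -> fold_right Rmax 0 l <= B.
Proof.
  intros HB; induction l as [|y l IH]; simpl; intros Hl; [lra|].
  apply Rmax_lub; auto.
Qed.

Lemma Cmod_maxabs {d : nat} (K : nat) (f : nat -> Zd d -> C) (n : Zd d) :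
  Cmod (maxabs K f n) = fold_right Rmax 0 (map (fun k => Cmod (f k n)) (seq 0 K)).
Proof.
  unfold maxabs. rewrite Cmod_R. apply Rabs_pos_eq, fold_Rmax_nonneg.
Qed.

Lemma maxabs_ge {d : nat} (K : nat) (f : nat -> Zd d -> C) (k : nat) (n : Zd d) :
  (k < K)%nat -> Cmod (f k n) <= Cmod (maxabs K f n).
Proof.
  intros Hk. rewrite Cmod_maxabs. apply fold_Rmax_ge.
  apply (in_map (fun k => Cmod (f k n))), in_seq. lia.
Qed.

Lemma maxabs_lub {d : nat} (K : nat) (f : nat -> Zd d -> C) (n : Zd d) (B : R) :
  0 <= B -> (forall k, (k < K)%nat -> Cmod (f k n) <= B) -> Cmod (maxabs K f n) <= B.
Proof.
  intros HB Hf. rewrite Cmod_maxabs. apply fold_Rmax_lub; [exact HB|].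
  intros x Hx. apply in_map_iff in Hx as [k [<- Hk]].
  apply in_seq in Hk. apply Hf. lia.
Qed.

Definition weight {d : nat} (m : nat) (n : Zd d) : R := (1 + znorm n) ^ m.

Lemma znorm_nonneg {d : nat} (n : Zd d) : 0 <= znorm n.
Proof.
  unfold znorm. apply IZR_le.
  destruct n as [v Hv]; simpl; clear Hv. induction v as [|a v IH]; simpl; lia.
Qed.

Lemma weight_ge1 {d : nat} (m : nat) (n : Zd d) : 1 <= weight m n.
Proof.
  unfold weight. pose proof (znorm_nonneg n).
  apply pow_R1_Rle. lra.
Qed.

Lemma weight_mono {d : nat} (m m' : nat) (n : Zd d) :
  (m <= m')%nat -> weight m n <= weight m' n.
Proof.
  intros Hm. unfold weight. pose proof (znorm_nonneg n).
  apply Rle_pow; [lra | exact Hm].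
Qed.

Definition bounded_by {d : nat} (M : R) (m : nat) (g f : Zd d -> C) : Prop :=
  forall n, Cmod (f n) <= M * weight m n * Cmod (g n).

Definition dominated {d : nat} (g f : Zd d -> C) : Prop :=
  exists (M : R) (m : nat), 0 < M /\ bounded_by M m g f.

Lemma bounded_by_mono {d : nat} (M M' : R) (m m' : nat) (g f : Zd d -> C) :
  0 <= M -> M <= M' -> (m <= m')%nat -> bounded_by M m g f -> bounded_by M' m' g f.
Proof.
  intros HM HMM' Hm Hb n.
  eapply Rle_trans; [apply Hb|].
  apply Rmult_le_compat_r; [apply Cmod_ge_0|].
  pose proof (weight_ge1 m n).
  apply Rmult_le_compat; [lra | lra | exact HMM' | apply weight_mono, Hm].
Qed.

Lemma tempered_dominated {d : nat} (f : Zd d -> C) :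
  tempered f <-> dominated (fun _ => RtoC 1) f.
Proof.
  unfold tempered, dominated, bounded_by, weight.
  setoid_rewrite Cmod_1. setoid_rewrite Rmult_1_r. tauto.
Qed.

Lemma sdvd_dominated {d : nat} (g f : Zd d -> C) : sdvd g f -> dominated g f.
Proof.
  intros [h [[M [m [HM Hh]]] Hf]].
  exists M, m. split; [exact HM|]. intros n.
  rewrite Hf, Cmod_mult. apply Rmult_le_compat_r; [apply Cmod_ge_0 | apply Hh].
Qed.

(* Conversely, domination yields divisibility, via the quotient f/g
   extended by 0 on the zero set of g. *)
Lemma dominated_sdvd {d : nat} (g f : Zd d -> C) : dominated g f -> sdvd g f.
Proof.
  intros [M [m [HM Hb]]].
  exists (fun n => if Ceq_dec (g n) 0 then RtoC 0 else Cdiv (f n) (g n)).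
  split.
  - exists M, m. split; [exact HM|]. intros n.
    pose proof (weight_ge1 m n) as Hw. fold (weight m n).
    destruct (Ceq_dec (g n) 0) as [Hg | Hg].
    + rewrite Cmod_0. apply Rmult_le_pos; lra.
    + assert (Hpos : 0 < Cmod (g n)) by (apply Cmod_gt_0, Hg).
      rewrite Cmod_div by exact Hg.
      apply (Rmult_le_reg_r (Cmod (g n))); [exact Hpos|].
      unfold Rdiv. rewrite Rmult_assoc, Rinv_l by lra.
      rewrite Rmult_1_r. apply Hb.
  - intros n. destruct (Ceq_dec (g n) 0) as [Hg | Hg].
    + assert (Hf0 : Cmod (f n) <= 0) by (rewrite <- (Rmult_0_r (M * weight m n)),
        <- Cmod_0, <- Hg; apply Hb).
      rewrite Cmult_0_l. apply Cmod_eq_0. pose proof (Cmod_ge_0 (f n)). lra.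
    + unfold Cdiv. rewrite <- Cmult_assoc, Cinv_l by exact Hg.
      now rewrite Cmult_1_r.
Qed.

Lemma dominated_uniform {d : nat} (K : nat) (g : Zd d -> C) (f : nat -> Zd d -> C) :
  (forall k, (k < K)%nat -> dominated g (f k)) ->
  exists (M : R) (m : nat), 0 < M /\ forall k, (k < K)%nat -> bounded_by M m g (f k).
Proof.
  induction K as [|K IH]; intros Hdom.
  - exists 1, 0%nat. split; [lra|]. intros k Hk. lia.
  - destruct IH as [M1 [m1 [HM1 Hb1]]]; [intros k Hk; apply Hdom; lia|].
    destruct (Hdom K ltac:(lia)) as [M2 [m2 [HM2 Hb2]]].
    exists (M1 + M2), (m1 + m2)%nat. split; [lra|].
    intros k Hk. destruct (Nat.lt_ge_cases k K) as [Hlt | Hge].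
    + apply (bounded_by_mono M1 _ m1); [lra | lra | lia | apply Hb1, Hlt].
    + replace k with K by lia.
      apply (bounded_by_mono M2 _ m2); [lra | lra | lia | exact Hb2].
Qed.

Lemma dominated_maxabs {d : nat} (K : nat) (g : Zd d -> C) (f : nat -> Zd d -> C) :
  (forall k, (k < K)%nat -> dominated g (f k)) -> dominated g (maxabs K f).
Proof.
  intros Hdom. destruct (dominated_uniform K g f Hdom) as [M [m [HM Hb]]].
  exists M, m. split; [exact HM|]. intros n.
  apply maxabs_lub.
  - pose proof (weight_ge1 m n). pose proof (Cmod_ge_0 (g n)).
    apply Rmult_le_pos; [apply Rmult_le_pos|]; lra.
  - intros k Hk. apply Hb, Hk.
Qed.

Lemma maxabs_dominates {d : nat} (K : nat) (f : nat -> Zd d -> C) (k : nat) :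
  (k < K)%nat -> dominated (maxabs K f) (f k).
Proof.
  intros Hk. exists 1, 0%nat. split; [lra|]. intros n.
  unfold weight. rewrite pow_O, !Rmult_1_l. apply maxabs_ge, Hk.
Qed.

Theorem proposition2p2 (d K : nat) (f : nat -> Zd d -> C)
  (hf : forall k : nat, (k < K)%nat -> tempered (f k)) :
  tempered (maxabs K f) /\
  (forall k : nat, (k < K)%nat -> sdvd (maxabs K f) (f k)) /\
  (forall dt : Zd d -> C, tempered dt ->
     (forall k : nat, (k < K)%nat -> sdvd dt (f k)) -> sdvd dt (maxabs K f)).
Proof.
  split; [|split].
  - apply tempered_dominated, dominated_maxabs.
    intros k Hk. apply tempered_dominated, hf, Hk.
  - intros k Hk. apply dominated_sdvd, maxabs_dominates, Hk.
  - intros dt _ Hdvd. apply dominated_sdvd, dominated_maxabs.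
    intros k Hk. apply sdvd_dominated, Hdvd, Hk.
Qed.
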